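(* Let $(a_i)_{i\ge 1}$ be integers and let $f(x)=\prod_{i=1}^\infty (1+(-x)^i)^{a_i}\in 1+x\,\mathbb Z[[x]]$. Then $f(x)\,f(-x)\,f(x^2)$ is the square of an element of $1+x\,\mathbb Z[[x]]$ if and only if $a_{2i}\equiv 0 \pmod 2$ for all $i\ge 1$.
   Context: $\mathbb Z[[x]]$ denotes formal power series with integer coefficients; the infinite product converges $x$-adically, and $(1+(-x)^i)^{a_i}$ for negative $a_i$ means the inverse power series. *)

From mathcomp Require Import all_boot all_order all_algebra.
Set Implicit Arguments. Unset Strict Implicit. Unset Printing Implicit Defensive.
Import Order.TTheory GRing.Theory Num.Theory.
Local Open Scope ring_scope.

(* Z[[x]] : f n is the coefficient of x^n *)
Definition fps := nat -> int.

Definition fone : fps := fun n => if n == 0%N then 1 else 0.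

Definition fmul (f g : fps) : fps :=
  fun n => \sum_(k < n.+1) f k * g (n - k)%N.

(* coefficients 0..n of the inverse of f, assuming f 0 = 1:
   g 0 = 1, g m = - sum_{k=1}^{m} f k * g (m-k) *)
Fixpoint finv_seq (f : fps) (n : nat) : seq int :=
  match n with
  | 0 => [:: 1]
  | m.+1 => let s := finv_seq f m in
            rcons s (- \sum_(k < m.+1) f k.+1 * nth 0 s (m - k)%N)
  end.

Definition finv (f : fps) : fps := fun n => nth 0 (finv_seq f n) n.

Definition fpow (f : fps) (a : int) : fps :=
  match a with
  | Posz m => iter m (fmul f) fone
  | Negz m => iter m.+1 (fmul (finv f)) fone
  end.

Definition one_plus_negx_pow (i : nat) : fps :=
  fun n => if n == 0%N then 1 else if n == i then (-1) ^+ i else 0.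

(* f(x) = prod_{i>=1} (1 + (-x)^i)^{a_i}, as an x-adic limit: for i > n the
   i-th factor is 1 mod x^{n+1}, so coefficient n of the infinite product is
   coefficient n of the finite product over 1 <= i <= n. *)
Definition partial_prod (a : nat -> int) (N : nat) : fps :=
  foldr (fun i acc => fmul (fpow (one_plus_negx_pow i) (a i)) acc) fone
        (iota 1 N).

Definition fprod_a (a : nat -> int) : fps := fun n => partial_prod a n n.

(* substitutions x -> -x and x -> x^2 *)
Definition fneg (f : fps) : fps := fun n => (-1) ^+ n * f n.
Definition fsq_arg (f : fps) : fps :=
  fun n => if odd n then 0 else f n./2.

Definition is_square_1x (h : fps) : Prop :=
  exists g : fps, g 0%N = 1 /\ forall n, fmul g g n = h n.

From HB Require Import structures.
From mathcomp Require Import all_boot all_order all_algebra zify ring.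
From Stdlib Require Import FunctionalExtensionality.
Import Order.TTheory GRing.Theory Num.Theory.
Set Implicit Arguments. Unset Strict Implicit. Unset Printing Implicit Defensive.
Local Open Scope ring_scope.

(* Write e_i = 1 + (-x)^i and F = f(x) f(-x) f(x^2).  For odd i,
   e_i(x) e_i(-x) = 1 - x^(2i) = e_i(x^2), so the i-th factor contributes the
   square e_i(x^2)^(2 a_i) to F; for even i, e_i(-x) = e_i(x), so it contributes
   (e_i^(a_i) e_i(x^2)^(a_i div 2))^2 e_i(x^2)^(a_i mod 2).  Hence F = P^2 D with
   D = prod_(i even) (1 + x^(2i))^(a_i mod 2), and D = 1 when every a_(2j) is
   even.  Otherwise take m least with a_(2m) odd: D = 1 + x^(4m) mod x^(4m+1), so
   F = g^2 would make (g/P)^2 = 1 + x^(4m) mod x^(4m+1).  This is impossible, as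
   the first non-constant coefficient of the square of a series u with u_0 = 1
   is even. *)

Local Notation e := one_plus_negx_pow.

Lemma fps_ext (f g : fps) : (forall n, f n = g n) -> f = g.
Proof. exact: functional_extensionality. Qed.

Lemma fmulE_rev f g n : fmul f g n = \sum_(k < n.+1) f (n - k)%N * g k.
Proof.
rewrite /fmul (reindex_inj rev_ord_inj) /=.
by apply: eq_bigr => k _; rewrite (sub_ordK k).
Qed.

Lemma fmul_coef0 f g : fmul f g 0%N = f 0%N * g 0%N.
Proof. by rewrite /fmul big_ord1. Qed.

Lemma fmulC : commutative fmul.
Proof.
move=> f g; apply: fps_ext => n; rewrite fmulE_rev /fmul.
by apply: eq_bigr => k _; rewrite mulrC.
Qed.

Lemma fmulA : associative fmul.
Proof.
move=> p q r; apply: fps_ext => n; rewrite {1}/fmul fmulE_rev.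
pose c j k := p j * (q (n - j - k)%N * r k).
transitivity (\sum_(j < n.+1) \sum_(k < n.+1 | (k <= n - j)%N) c j k).
  apply: eq_bigr => /= j _; rewrite fmulE_rev big_distrr /=.
  by rewrite (big_ord_narrow_leq (leq_subr _ _)).
rewrite (exchange_big_dep predT) //=; apply: eq_bigr => k _.
transitivity (\sum_(j < n.+1 | (j <= n - k)%N) c j k).
  apply: eq_bigl => j; rewrite -ltnS -(ltnS j) -!subSn ?leq_ord //.
  by rewrite -subn_gt0 -(subn_gt0 j) -!subnDA addnC.
rewrite (big_ord_narrow_leq (leq_subr _ _)) /fmul big_distrl /=.
by apply: eq_bigr => j _; rewrite /c -!subnDA addnC mulrA.
Qed.

Lemma fmul1f : left_id fone fmul.
Proof.
move=> f; apply: fps_ext => n; rewrite /fmul big_ord_recl subn0 /fone /= mul1r.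
by rewrite big1 ?addr0 // => k _; rewrite mul0r.
Qed.

Lemma fmulf1 : right_id fone fmul.
Proof. by move=> f; rewrite fmulC fmul1f. Qed.

HB.instance Definition _ := Monoid.isComLaw.Build fps fone fmul fmulA fmulC fmul1f.

Lemma fmulCA : left_commutative fmul.
Proof. by move=> f g h; rewrite !fmulA (fmulC f). Qed.

Lemma fmulAC : right_commutative fmul.
Proof. by move=> f g h; rewrite -!fmulA (fmulC g). Qed.

Lemma fmulACA : interchange fmul fmul.
Proof. by move=> f g h k; rewrite -!fmulA (fmulCA g). Qed.

Lemma size_finv_seq f n : size (finv_seq f n) = n.+1.
Proof. by elim: n => //= n IH; rewrite size_rcons IH. Qed.

Lemma nth_finv_seq f n k : (k <= n)%N -> nth 0 (finv_seq f n) k = finv f k.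
Proof.
elim: n k => [|n IH] k; first by rewrite leqn0 => /eqP ->.
rewrite leq_eqVlt => /predU1P[-> //|lt_kn].
by rewrite /= nth_rcons size_finv_seq lt_kn IH.
Qed.

Lemma finvS f n : finv f n.+1 = - \sum_(k < n.+1) f k.+1 * finv f (n - k)%N.
Proof.
rewrite {1}/finv /= nth_rcons size_finv_seq ltnn eqxx; congr (- _).
by apply: eq_bigr => k _; rewrite nth_finv_seq // leq_subr.
Qed.

Lemma fmul_finv f : f 0%N = 1 -> fmul f (finv f) = fone.
Proof.
move=> f0; apply: fps_ext => -[|n]; first by rewrite fmul_coef0 f0 mul1r.
rewrite /fmul big_ord_recl f0 mul1r subn0 finvS /fone /=.
by rewrite addrC; apply/eqP; rewrite subr_eq0; apply/eqP; apply: eq_bigr.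
Qed.

Lemma finv_unique f g : f 0%N = 1 -> fmul f g = fone -> g = finv f.
Proof.
by move=> f0 fg1; rewrite -[g]fmul1f -(fmul_finv f0) fmulAC fg1 fmul1f.
Qed.

Lemma finv_fmul f g : f 0%N = 1 -> g 0%N = 1 ->
  finv (fmul f g) = fmul (finv f) (finv g).
Proof.
move=> f0 g0; symmetry; apply: finv_unique; first by rewrite fmul_coef0 f0 g0 mulr1.
by rewrite fmulACA !fmul_finv // fmulf1.
Qed.

Lemma finv_fone : finv fone = fone.
Proof. by symmetry; apply: finv_unique; rewrite ?fmulf1. Qed.

Definition fexp f m := iter m (fmul f) fone.

Lemma fexpD f m n : fexp f (m + n) = fmul (fexp f m) (fexp f n).
Proof. by elim: m => [|m IH]; rewrite ?fmul1f //= IH fmulA. Qed.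

Lemma fexpMn f g m : fexp (fmul f g) m = fmul (fexp f m) (fexp g m).
Proof. by elim: m => [|m IH] /=; rewrite ?fmulf1 // IH fmulACA. Qed.

Lemma fexp_fone m : fexp fone m = fone.
Proof. by elim: m => //= m ->; rewrite fmulf1. Qed.

Lemma fexp_finv f m n : f 0%N = 1 ->
  fmul (fexp f m) (fexp (finv f) n) =
  if (n <= m)%N then fexp f (m - n) else fexp (finv f) (n - m).
Proof.
move=> f0; elim: n m => [|n IH] [|m] //=; rewrite ?fmulf1 ?fmul1f //.
by rewrite fmulACA fmul_finv // fmul1f IH.
Qed.

Lemma fpow_fone a : fpow fone a = fone.
Proof. by case: a => m; rewrite /fpow ?finv_fone -/(fexp _ _) fexp_fone. Qed.

Lemma fpowMn f g a : f 0%N = 1 -> g 0%N = 1 ->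
  fpow (fmul f g) a = fmul (fpow f a) (fpow g a).
Proof.
move=> f0 g0; case: a => m; first exact: fexpMn.
by rewrite /fpow finv_fmul //; apply: (fexpMn _ _ m.+1).
Qed.

Lemma fpowD f a b : f 0%N = 1 -> fpow f (a + b) = fmul (fpow f a) (fpow f b).
Proof.
move=> f0.
have posD_neg m n : fpow f (Posz m + Negz n) = fmul (fpow f (Posz m)) (fpow f (Negz n)).
  rewrite [RHS](fexp_finv m n.+1 f0); case: (leqP n.+1 m) => [le_nm | lt_mn].
    by have -> : Posz m + Negz n = Posz (m - n.+1) by rewrite NegzE; lia.
  have -> : Posz m + Negz n = Negz (n - m) by rewrite !NegzE; lia.
  by rewrite subSn // -ltnS.
case: a => m; case: b => n.
- by rewrite -PoszD; apply: fexpD.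
- exact: posD_neg.
- by rewrite addrC posD_neg fmulC.
- have -> : Negz m + Negz n = Negz (m + n).+1 by rewrite !NegzE; lia.
  by rewrite /fpow -addnS; apply: (fexpD _ m.+1 n.+1).
Qed.

Definition eqmodx (N : nat) (f g : fps) := forall n, (n < N)%N -> f n = g n.

Lemma eqmodx_refl N f : eqmodx N f f.
Proof. by []. Qed.

Lemma eqmodx_sym N f g : eqmodx N f g -> eqmodx N g f.
Proof. by move=> Efg n lt_nN; rewrite Efg. Qed.

Lemma eqmodx_trans N f g h : eqmodx N f g -> eqmodx N g h -> eqmodx N f h.
Proof. by move=> Efg Egh n lt_nN; rewrite Efg ?Egh. Qed.

Lemma eqmodx_le M N f g : (M <= N)%N -> eqmodx N f g -> eqmodx M f g.
Proof. by move=> le_MN Efg n lt_nM; rewrite Efg // (leq_trans lt_nM). Qed.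

Lemma eqmodx_fmul N f f' g g' :
  eqmodx N f f' -> eqmodx N g g' -> eqmodx N (fmul f g) (fmul f' g').
Proof.
move=> Ef Eg n lt_nN; apply: eq_bigr => k _.
by rewrite Ef ?Eg //; have := ltn_ord k; lia.
Qed.

Lemma eqmodx_fmul1 N f g :
  eqmodx N f fone -> eqmodx N g fone -> eqmodx N (fmul f g) fone.
Proof. by move=> Ef Eg; rewrite -(fmulf1 fone); apply: eqmodx_fmul. Qed.

Lemma eqmodx_prod1 N (I : eqType) (s : seq I) (F : I -> fps) :
  (forall i, i \in s -> eqmodx N (F i) fone) ->
  eqmodx N (\big[fmul/fone]_(i <- s) F i) fone.
Proof.
move=> F1; rewrite big_seq.
by apply: (big_ind (eqmodx N ^~ fone)) => //; apply: eqmodx_fmul1.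
Qed.

Lemma eqmodx_finv N f g : f 0%N = 1 -> g 0%N = 1 ->
  eqmodx N f g -> eqmodx N (finv f) (finv g).
Proof.
move=> f0 g0 Efg; rewrite -[finv f]fmulf1 -(fmul_finv g0) fmulA.
apply: (@eqmodx_trans _ _ (fmul (fmul (finv f) f) (finv g))).
  by apply: eqmodx_fmul => //; apply: eqmodx_fmul => //; apply: eqmodx_sym.
by rewrite (fmulC _ f) fmul_finv // fmul1f.
Qed.

Lemma eqmodx_fexp N f g m : eqmodx N f g -> eqmodx N (fexp f m) (fexp g m).
Proof. by move=> Efg; elim: m => //= m IH; apply: eqmodx_fmul. Qed.

Lemma eqmodx_fpow N f g a : f 0%N = 1 -> g 0%N = 1 ->
  eqmodx N f g -> eqmodx N (fpow f a) (fpow g a).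
Proof.
move=> f0 g0 Efg; case: a => m; first exact: eqmodx_fexp.
exact: (eqmodx_fexp m.+1 (eqmodx_finv f0 g0 Efg)).
Qed.

Lemma eqmodx_fpow1 N f a : eqmodx N f fone -> eqmodx N (fpow f a) fone.
Proof.
case: N => [//|N] Ef; rewrite -(fpow_fone a).
by apply: eqmodx_fpow => //; apply: Ef.
Qed.

Section MultiplicativeSubstitution.

Variable sigma : fps -> fps.
Hypothesis sigma_fmul : {morph sigma : f g / fmul f g}.
Hypothesis sigma_fone : sigma fone = fone.
Hypothesis sigma_coef0 : forall f, sigma f 0%N = f 0%N.

Lemma sigma_finv f : f 0%N = 1 -> sigma (finv f) = finv (sigma f).
Proof.
move=> f0; apply: finv_unique; first by rewrite sigma_coef0.
by rewrite -sigma_fmul fmul_finv.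
Qed.

Lemma sigma_fexp f m : sigma (fexp f m) = fexp (sigma f) m.
Proof. by elim: m => //= m IH; rewrite sigma_fmul IH. Qed.

Lemma sigma_fpow f a : f 0%N = 1 -> sigma (fpow f a) = fpow (sigma f) a.
Proof.
move=> f0; case: a => m; first exact: sigma_fexp.
by rewrite /fpow -(sigma_finv f0); apply: (sigma_fexp _ m.+1).
Qed.

End MultiplicativeSubstitution.

Lemma fneg_fmul : {morph fneg : f g / fmul f g}.
Proof.
move=> f g; apply: fps_ext => n; rewrite /fneg /fmul mulr_sumr; apply: eq_bigr => k _.
by rewrite -{1}(subnKC (ltn_ord k : (k <= n)%N)) exprD; ring.
Qed.

Lemma fneg_fone : fneg fone = fone.
Proof. by apply: fps_ext => -[|n]; rewrite /fneg /fone /= ?mulr0 ?mulr1. Qed.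

Lemma fneg_coef0 f : fneg f 0%N = f 0%N.
Proof. by rewrite /fneg expr0 mul1r. Qed.

Lemma eqmodx_fneg N f g : eqmodx N f g -> eqmodx N (fneg f) (fneg g).
Proof. by move=> Efg n lt_nN; rewrite /fneg Efg. Qed.

Lemma sum_even_terms (R : nmodType) (F : nat -> R) m :
  (forall k, odd k -> F k = 0) ->
  \sum_(k < m.*2.+1) F k = \sum_(j < m.+1) F j.*2.
Proof.
move=> F_odd; elim: m => [|m IH]; first by rewrite !big_ord1.
rewrite doubleS big_ord_recr /= big_ord_recr /= IH [RHS]big_ord_recr /=.
by rewrite F_odd /= ?odd_double // addr0.
Qed.

Lemma fsq_arg_fmul : {morph fsq_arg : f g / fmul f g}.
Proof.
move=> f g; apply: fps_ext => n; rewrite /fsq_arg /fmul.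
case: ifP => odd_n.
  symmetry; apply: big1 => k _.
  move: odd_n; rewrite -{1}(subnKC (ltn_ord k : (k <= n)%N)) oddD.
  by case: (odd k) => /= [_|->]; rewrite ?mul0r ?mulr0.
move: (odd_double_half n); rewrite odd_n add0n; move: (n./2) => m <-.
pose F k := (if odd k then 0 else f k./2) *
             (if odd (m.*2 - k) then 0 else g (m.*2 - k)./2).
rewrite (@sum_even_terms _ F); last by move=> k odd_k; rewrite /F odd_k mul0r.
apply: eq_bigr => j _; have le_jm : (j <= m)%N := ltn_ord j.
by rewrite /F odd_double doubleK -doubleB odd_double doubleK.
Qed.

Lemma fsq_arg_fone : fsq_arg fone = fone.
Proof.
apply: fps_ext => -[|n] //; rewrite /fsq_arg /fone /=.
by case: ifP => // even_n; case: ifP => // /eqP; lia.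
Qed.

Lemma fsq_arg_coef0 f : fsq_arg f 0%N = f 0%N.
Proof. by []. Qed.

Lemma eqmodx_fsq_arg N f g : eqmodx N f g -> eqmodx N (fsq_arg f) (fsq_arg g).
Proof. by move=> Efg n lt_nN; rewrite /fsq_arg Efg //; lia. Qed.

Lemma eqmodx_one_plus_negx_pow i : eqmodx i (e i) fone.
Proof.
move=> n lt_ni; rewrite /one_plus_negx_pow /fone.
by case: ifP => //; rewrite (ltn_eqF lt_ni).
Qed.

Lemma fsq_arg_one_plus_negx_pow i n :
  fsq_arg (e i) n = if n == 0%N then 1 else if n == i.*2 then (-1) ^+ i else 0.
Proof.
rewrite /fsq_arg /one_plus_negx_pow; case: (boolP (odd n)) => odd_n.
  have -> : (n == 0%N) = false by lia.
  by have -> : (n == i.*2) = false by lia.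
have -> : (n./2 == 0%N) = (n == 0%N) by lia.
by have -> : (n./2 == i) = (n == i.*2) by lia.
Qed.

Lemma eqmodx_fsq_arg_one_plus_negx_pow i : eqmodx i.*2 (fsq_arg (e i)) fone.
Proof.
move=> n lt_ni; rewrite fsq_arg_one_plus_negx_pow /fone.
by case: ifP => //; rewrite (ltn_eqF lt_ni).
Qed.

Lemma fneg_one_plus_negx_pow_even i : ~~ odd i -> fneg (e i) = e i.
Proof.
move=> even_i; apply: fps_ext => n; rewrite /fneg /one_plus_negx_pow.
case: eqP => [->|_]; first by rewrite mul1r.
by case: eqP => [->|_]; rewrite ?mulr0 // -signr_odd (negbTE even_i) mul1r.
Qed.

Lemma fmul_one_plus_negx_pow i h n : (0 < i)%N ->
  fmul (e i) h n = h n + (if (i <= n)%N then (-1) ^+ i * h (n - i)%N else 0).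
Proof.
move=> i_gt0.
have -> : fmul (e i) h n =
    fmul fone h n + \sum_(k < n.+1) (if k == i :> nat then (-1) ^+ i else 0) * h (n - k)%N.
  rewrite /fmul -big_split; apply: eq_bigr => k _ /=.
  rewrite -mulrDl /one_plus_negx_pow /fone.
  by case: eqP => [->|_]; rewrite ?add0r // ltn_eqF // addr0.
rewrite fmul1f; congr (_ + _); case: leqP => [le_in|lt_ni].
  rewrite (bigD1 (Ordinal (le_in : (i < n.+1)%N))) //= eqxx big1 ?addr0 // => k.
  by rewrite -val_eqE /= => /negbTE ->; rewrite mul0r.
by rewrite big1 // => k _; case: eqP => [k_i|_]; [have := ltn_ord k; lia | rewrite mul0r].
Qed.

Lemma fmul_fneg_one_plus_negx_pow_odd i :
  odd i -> fmul (e i) (fneg (e i)) = fsq_arg (e i).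
Proof.
move=> odd_i; have i_gt0 : (0 < i)%N by case: i odd_i.
have sgn_i : (-1) ^+ i = -1 :> int by rewrite -signr_odd odd_i.
have fneg_e n : fneg (e i) n = if n == 0%N then 1 else if n == i then 1 else 0.
  rewrite /fneg /one_plus_negx_pow; case: eqP => [->|_]; first by rewrite expr0 mulr1.
  by case: eqP => [->|_]; rewrite ?mulr0 // -exprD addnn -signr_odd odd_double.
apply: fps_ext => n.
rewrite fmul_one_plus_negx_pow // fsq_arg_one_plus_negx_pow sgn_i !fneg_e.
by do ![case: ifP]; lia.
Qed.

(* The x-adic limit of the partial products prod_(1 <= i <= N) phi i, which
   exists as soon as phi i = 1 mod x^i. *)
Definition xlim (phi : nat -> fps) : fps :=
  fun n => (\big[fmul/fone]_(i <- iota 1 n) phi i) n.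

Lemma eqmodx_xlim (phi : nat -> fps) N : (forall i, eqmodx i (phi i) fone) ->
  eqmodx N (xlim phi) (\big[fmul/fone]_(i <- iota 1 N) phi i).
Proof.
move=> phi1 n lt_nN; rewrite /xlim -(subnKC (ltnW lt_nN)) iotaD big_cat /=.
have tail1 : eqmodx n.+1 (\big[fmul/fone]_(i <- iota (1 + n) (N - n)) phi i) fone.
  apply: eqmodx_prod1 => i; rewrite mem_iota => /andP[le_ni _].
  exact: eqmodx_le le_ni (phi1 i).
by rewrite (eqmodx_fmul (@eqmodx_refl _ _) tail1) // fmulf1.
Qed.

Lemma sqr_coef_after_gap u n :
  u 0%N = 1 -> (forall k, (0 < k <= n)%N -> u k = 0) -> fmul u u n.+1 = 2 * u n.+1.
Proof.
move=> u0 u_low; rewrite /fmul big_ord_recl big_ord_recr !lift0 /=.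
rewrite subn0 subnn u0 mul1r mulr1 big1 ?add0r; first lia.
by move=> k _; rewrite u_low ?mul0r // /bump /=; have := ltn_ord k; lia.
Qed.

Lemma sqr_first_coef_even u N : (0 < N)%N -> u 0%N = 1 ->
  (forall n, (0 < n < N)%N -> fmul u u n = 0) -> (2 %| fmul u u N)%Z.
Proof.
move=> N_gt0 u0 sqr_low.
have u_low k : (0 < k < N)%N -> u k = 0.
  elim/ltn_ind: k => -[//|k] IH /andP[_ lt_kN].
  have := sqr_low k.+1 lt_kN; rewrite sqr_coef_after_gap //; first lia.
  by move=> j /andP[j_gt0 le_jk]; apply: IH; lia.
case: N N_gt0 sqr_low u_low => // N _ _ u_low.
by rewrite sqr_coef_after_gap //; lia.
Qed.

Section Factorization.

Variable a : nat -> int.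

Definition factor i := fpow (e i) (a i).

Definition root_part i :=
  if odd i then fpow (fsq_arg (e i)) (a i)
  else fmul (fpow (e i) (a i)) (fpow (fsq_arg (e i)) (a i %/ 2)%Z).

Definition defect i := if odd i then fone else fpow (fsq_arg (e i)) (a i %% 2)%Z.

Local Notation G :=
  (fmul (fmul (fprod_a a) (fneg (fprod_a a))) (fsq_arg (fprod_a a))).
Local Notation root_prod N := (\big[fmul/fone]_(i <- iota 1 N) root_part i).
Local Notation defect_prod N := (\big[fmul/fone]_(i <- iota 1 N) defect i).

Lemma factor_decomp i :
  fmul (fmul (factor i) (fneg (factor i))) (fsq_arg (factor i)) =
  fmul (fmul (root_part i) (root_part i)) (defect i).
Proof.
rewrite /factor (sigma_fpow fneg_fmul fneg_fone fneg_coef0) //.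
rewrite (sigma_fpow fsq_arg_fmul fsq_arg_fone fsq_arg_coef0) // /root_part /defect.
case: ifP => odd_i.
  by rewrite -fpowMn ?fneg_coef0 // fmul_fneg_one_plus_negx_pow_odd // fmulf1.
rewrite fneg_one_plus_negx_pow_even ?odd_i //.
have -> : fpow (fsq_arg (e i)) (a i) =
    fmul (fmul (fpow (fsq_arg (e i)) (a i %/ 2)%Z) (fpow (fsq_arg (e i)) (a i %/ 2)%Z))
         (fpow (fsq_arg (e i)) (a i %% 2)%Z).
  by rewrite -!fpowD //; congr fpow; lia.
by rewrite fmulA fmulACA.
Qed.

Lemma eqmodx_factor i : eqmodx i (factor i) fone.
Proof. exact/eqmodx_fpow1/eqmodx_one_plus_negx_pow. Qed.

Lemma eqmodx_root_part i : eqmodx i (root_part i) fone.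
Proof.
have le_i_2i : (i <= i.*2)%N by rewrite -addnn leq_addr.
have Es := eqmodx_le le_i_2i (@eqmodx_fsq_arg_one_plus_negx_pow i).
rewrite /root_part; case: ifP => _; first exact: eqmodx_fpow1.
exact/eqmodx_fmul1/eqmodx_fpow1/Es/eqmodx_factor.
Qed.

Lemma defect_eq_fone i : (~~ odd i -> (2 %| a i)%Z) -> defect i = fone.
Proof.
move=> even_dvd; rewrite /defect; case: ifP => // /negbT /even_dvd dvd2_a.
by have -> : (a i %% 2)%Z = 0 by lia.
Qed.

Lemma defect_double_coef m n :
  defect (2 * m) n =
  if n == 0%N then 1 else if n == (4 * m)%N then (a (2 * m) %% 2)%Z else 0.
Proof.
rewrite /defect oddM /=.
have [->|->] : (a (2 * m) %% 2)%Z = 0 \/ (a (2 * m) %% 2)%Z = 1 by lia.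
  by rewrite /= /fone; case: ifP => //; case: ifP.
rewrite /= fmulf1 fsq_arg_one_plus_negx_pow -signr_odd oddM /=.
by have -> : ((2 * m).*2 = 4 * m)%N by lia.
Qed.

Lemma fprod_aE : fprod_a a = xlim factor.
Proof. by rewrite /xlim unlock. Qed.

Lemma eqmodx_sqr_mul_defect N :
  eqmodx N G (fmul (fmul (root_prod N) (root_prod N)) (defect_prod N)).
Proof.
have Ef : eqmodx N (fprod_a a) (\big[fmul/fone]_(i <- iota 1 N) factor i).
  by rewrite fprod_aE; apply: eqmodx_xlim eqmodx_factor.
apply: eqmodx_trans (eqmodx_fmul (eqmodx_fmul Ef (eqmodx_fneg Ef)) (eqmodx_fsq_arg Ef)) _.
rewrite (big_morph _ fneg_fmul fneg_fone) (big_morph _ fsq_arg_fmul fsq_arg_fone).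
rewrite -!big_split /= (eq_bigr _ (fun i _ => factor_decomp i)) !big_split.
exact: eqmodx_refl.
Qed.

Lemma eqmodx_defect_prod m N : (2 * m <= N)%N -> (0 < m)%N ->
  (forall j, (0 < j < m)%N -> (2 %| a (2 * j)%N)%Z) ->
  eqmodx (4 * m).+1 (defect_prod N) (defect (2 * m)).
Proof.
move=> le_2m_N m_gt0 even_below.
have mem_2m : (2 * m \in iota 1 N)%N by rewrite mem_iota; lia.
rewrite (bigD1_seq _ mem_2m (iota_uniq 1 N)) /= -[X in eqmodx _ _ X]fmulf1.
apply: eqmodx_fmul; first exact: eqmodx_refl.
rewrite -big_filter; apply: eqmodx_prod1 => i.
rewrite mem_filter mem_iota => /andP[ne_i_2m /andP[i_gt0 _]].
have [lt_i_2m | lt_2m_i] : (i < 2 * m \/ 2 * m < i)%N by lia.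
  rewrite defect_eq_fone // => even_i; rewrite (_ : i = 2 * i./2)%N; last by lia.
  by apply: even_below; lia.
rewrite /defect; case: ifP => _ //; apply: eqmodx_fpow1.
by apply: eqmodx_le (@eqmodx_fsq_arg_one_plus_negx_pow i); lia.
Qed.

Lemma sqr_of_even_coefs :
  (forall i, (1 <= i)%N -> (2 %| a (2 * i)%N)%Z) -> is_square_1x G.
Proof.
move=> even_a; exists (xlim root_part); split=> [|n]; first by rewrite /xlim big_nil.
have Eg := @eqmodx_xlim _ n.+1 eqmodx_root_part.
rewrite (eqmodx_fmul Eg Eg (ltnSn n)) (eqmodx_sqr_mul_defect (ltnSn n)).
suff -> : defect_prod n.+1 = fone by rewrite fmulf1.
apply: big1_seq => i /andP[_]; rewrite mem_iota => /andP[i_gt0 _].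
apply: defect_eq_fone => even_i; rewrite (_ : i = 2 * i./2)%N; last by lia.
by apply: even_a; lia.
Qed.

Lemma even_coef_of_sqr g m : g 0%N = 1 -> fmul g g = G -> (0 < m)%N ->
  (forall j, (0 < j < m)%N -> (2 %| a (2 * j)%N)%Z) -> (2 %| a (2 * m)%N)%Z.
Proof.
move=> g0 sqr_g m_gt0 even_below.
set P := root_prod (4 * m).+1.
have P0 : P 0%N = 1.
  apply: (eqmodx_prod1 (N := 1)) => // i; rewrite mem_iota => /andP[i_gt0 _].
  exact: eqmodx_le i_gt0 (@eqmodx_root_part i).
pose u := fmul g (finv P).
have u0 : u 0%N = 1 by rewrite /u fmul_coef0 g0 mul1r.
have Eu : eqmodx (4 * m).+1 (fmul u u) (defect (2 * m)).
  have -> : fmul u u = fmul G (fmul (finv P) (finv P)) by rewrite /u fmulACA sqr_g.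
  have EG := @eqmodx_sqr_mul_defect (4 * m).+1.
  apply: eqmodx_trans (eqmodx_fmul EG (@eqmodx_refl _ _)) _.
  rewrite fmulAC fmulACA fmul_finv // !fmul1f.
  by apply: eqmodx_defect_prod => //; lia.
have sqr_low n : (0 < n < 4 * m)%N -> fmul u u n = 0.
  move=> /andP[n_gt0 lt_n4m]; rewrite Eu ?defect_double_coef; last by lia.
  by rewrite gtn_eqF // ltn_eqF.
have pos_4m : (0 < 4 * m)%N by lia.
have := sqr_first_coef_even pos_4m u0 sqr_low.
by rewrite Eu // defect_double_coef eqxx gtn_eqF //; lia.
Qed.

End Factorization.

Theorem theorem4p1 (a : nat -> int) :
  is_square_1x (fmul (fmul (fprod_a a) (fneg (fprod_a a))) (fsq_arg (fprod_a a)))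
  <-> (forall i : nat, (1 <= i)%N -> (2 %| a (2 * i)%N)%Z).
Proof.
split; last exact: sqr_of_even_coefs.
move=> [g [g0 sqr_g]]; have {}sqr_g := fps_ext sqr_g.
elim/ltn_ind => m IH m_gt0; apply: (even_coef_of_sqr g0 sqr_g m_gt0).
by move=> j /andP[j_gt0 lt_jm]; apply: IH.
Qed.
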